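(* Let $\mathcal{W}$ be a finite full binary forest. Then every node $x$ of $\mathcal{W}$ is deleted in the pruning procedure during the $r(x)$-th iteration.
   Context: A full binary forest is a finite rooted forest in which every node has $0$ or $2$ children. An ascending path is a sequence of nodes $(x_1,\dots,x_L)$ with $x_{k+1}$ the parent of $x_k$. In a rooted forest (not necessarily full) in which every node has at most 2 children, an only-child-path is an ascending path starting at a leaf and ending at the first encountered node that has a sibling, or at a root (it has length $1$ if the starting leaf has a sibling). Pruning procedure: $\mathcal{W}_{(0)}=\mathcal{W}$; in iteration $i\ge1$, $\mathcal{W}_{(i)}$ is obtained from $\mathcal{W}_{(i-1)}$ by deleting all nodes of all only-child-paths of $\mathcal{W}_{(i-1)}$; stop when the forest is empty. The function $r$ on nodes of $\mathcal{W}$: $r(x)=1$ if $x$ is a leaf; if $x$ has children $y_1,y_2$, $r(x)=r(y_1)+1$ when $r(y_1)=r(y_2)$, and $r(x)=\max\{r(y_1),r(y_2)\}$ otherwise. *)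

(* A finite rooted forest is encoded by a finite type T of
   nodes together with a parent map par : T -> option T (None = root). *)
From mathcomp Require Import all_boot.
Set Implicit Arguments. Unset Strict Implicit. Unset Printing Implicit Defensive.

Section Forest.
Variables (T : finType) (par : T -> option T).

Definition is_forest : Prop :=
  forall x : T, exists n, iter n (fun o => obind par o) (Some x) = None.

Definition children (x : T) : {set T} := [set y | par y == Some x].

Definition full_binary : Prop :=
  forall x : T, (#|children x| == 0) || (#|children x| == 2).

(* The function r, as an inductive relation following its recursive definition. *)
Inductive rk : T -> nat -> Prop :=
| rk_leaf x : (forall y, par y <> Some x) -> rk x 1
| rk_node x y1 y2 a b : y1 != y2 -> par y1 = Some x -> par y2 = Some x ->
    rk y1 a -> rk y2 b -> rk x (if a == b then a.+1 else maxn a b).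

(* Sub-forests: the forest induced on a set S of nodes (S : T -> Prop). *)
Definition parS (S : T -> Prop) x y := S x /\ S y /\ par x = Some y.
Definition leafS (S : T -> Prop) x := S x /\ forall y, S y -> par y <> Some x.
Definition rootS (S : T -> Prop) x := S x /\ forall y, par x = Some y -> ~ S y.
Definition siblingS (S : T -> Prop) x :=
  exists y, y <> x /\ S y /\ exists p, S p /\ par x = Some p /\ par y = Some p.

Definition ocpath (S : T -> Prop) (s : seq T) : Prop :=
  match s with
  | [::] => False
  | x1 :: _ =>
      leafS S x1 /\
      (forall i, i.+1 < size s ->
         parS S (nth x1 s i) (nth x1 s i.+1) /\ ~ siblingS S (nth x1 s i)) /\
      (siblingS S (last x1 s) \/ rootS S (last x1 s))
  end.

Fixpoint pruned (i : nat) : T -> Prop :=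
  match i with
  | 0 => fun _ => True
  | i'.+1 => fun z => pruned i' z /\ ~ (exists s, ocpath (pruned i') s /\ z \in s)
  end.

Definition deleted_at (x : T) (i : nat) : Prop :=
  0 < i /\ pruned i.-1 x /\ ~ pruned i x.

End Forest.

(* Write S_j for the sub-forest of the nodes z with r(z) >= j; we show W_(i) = S_(i+1)
   by induction on i, which gives the theorem.  In S_j every node on an only-child path
   has rank exactly j: a leaf of S_j has both children of rank < j, and climbing to a
   parent whose other child lies outside S_j does not change r.  Conversely a node of
   rank j lies on such a path: descend through its (unique) child of rank j down to a
   leaf of S_j, then climb until a node with a sibling in S_j or a root is reached. *)

From mathcomp Require Import all_boot zify.
From Stdlib Require Import Classical IndefiniteDescription FunctionalExtensionality PropExtensionality.
Set Implicit Arguments. Unset Strict Implicit. Unset Printing Implicit Defensive.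

Definition rjoin (a b : nat) := if a == b then a.+1 else maxn a b.

Lemma rjoinC a b : rjoin a b = rjoin b a.
Proof. by rewrite /rjoin eq_sym; case: eqP => [->|_]; rewrite // maxnC. Qed.

Lemma leq_rjoinl a b : a <= rjoin a b.
Proof. rewrite /rjoin; case: eqP => _; lia. Qed.

Lemma rjoin_idl a b : (rjoin a b == a) = (b < a).
Proof.
rewrite /rjoin; case: (eqVneq a b) => [->|neq]; first by rewrite ltnn eqn_leq ltnn.
by apply/eqP/idP => [/maxn_idPl|lt_ba]; [rewrite ltn_neqAle eq_sym neq | apply/maxn_idPl/ltnW].
Qed.

Lemma rjoin_leq a b j : a < j -> b < j -> rjoin a b <= j.
Proof. rewrite /rjoin; case: eqP => ?; lia. Qed.

Section Forest.
Variables (T : finType) (par : T -> option T).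
Hypotheses (forest : is_forest par) (full : full_binary par).

Lemma root_reachable x : exists n, iter n (obind par) (Some x) == None.
Proof. by have [n hn] := forest x; exists n; apply/eqP. Qed.

Definition depth x := ex_minn (root_reachable x).

Lemma depth_child x y : par y = Some x -> depth y = (depth x).+1.
Proof.
rewrite /depth => hyx.
case: ex_minnP => n /eqP hn min_n; case: ex_minnP => m /eqP hm min_m.
have iterS k : iter k.+1 (obind par) (Some y) = iter k (obind par) (Some x).
  by rewrite iterSr /= hyx.
have le_nm : n <= m.+1 by apply: min_n; rewrite iterS hm.
case: n hn le_nm {min_n} => [|n] // hn le_nm.
have : m <= n by apply: min_m; rewrite -iterS hn.
lia.
Qed.

Lemma children_ind (P : T -> Prop) :
  (forall x, (forall y, par y = Some x -> P y) -> P x) -> forall x, P x.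
Proof.
move=> IH; set M := \max_(x : T) depth x.
suff upto k x : M - depth x <= k -> P x by move=> x; apply: (upto _ x (leqnn _)).
elim: k x => [|k IHk] x bound; apply: IH => y hy;
  have := depth_child hy; have : depth y <= M by apply: leq_bigmax.
- lia.
- by move=> ? ?; apply: IHk; lia.
Qed.

Lemma parent_ind (P : T -> Prop) :
  (forall x, (forall y, par x = Some y -> P y) -> P x) -> forall x, P x.
Proof.
move=> IH; suff upto k x : depth x <= k -> P x by move=> x; apply: (upto _ x (leqnn _)).
elim: k x => [|k IHk] x bound; apply: IH => y hy; have := depth_child hy.
- lia.
- by move=> ?; apply: IHk; lia.
Qed.

Definition ocprefix (S : T -> Prop) x1 (u : seq T) :=
  leafS par S x1 /\ forall i, i < size u ->
    parS par S (nth x1 (x1 :: u) i) (nth x1 (x1 :: u) i.+1) /\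
    ~ siblingS par S (nth x1 (x1 :: u) i).

Lemma ocpathE S x1 u :
  ocpath par S (x1 :: u) <->
  ocprefix S x1 u /\ (siblingS par S (last x1 u) \/ rootS par S (last x1 u)).
Proof.
rewrite /ocpath /ocprefix /=; split=> [[leaf [chain stop]]|[[leaf chain] stop]].
- by do !split=> // i lt_iu; apply: chain; rewrite ltnS.
- by do !split=> // i lt_iu; apply: chain; rewrite -ltnS.
Qed.

Lemma ocprefix_last S x1 u : ocprefix S x1 u -> S (last x1 u).
Proof.
case: u => [|y u] [[S_x1 _] chain] //.
have [[_ [S_last _]] _] := chain (size u) (ltnSn _).
by rewrite -(nth_last x1 (y :: u)).
Qed.

Lemma ocprefix_rcons S x1 u p :
  ocprefix S x1 u -> parS par S (last x1 u) p -> ~ siblingS par S (last x1 u) ->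
  ocprefix S x1 (rcons u p).
Proof.
move=> [leaf chain] up nosib; split=> // i.
rewrite size_rcons ltnS leq_eqVlt -rcons_cons !nth_rcons /=.
case/orP=> [/eqP->|lt_iu].
- by rewrite leqnn ltnn eqxx; have /= -> := nth_last x1 (x1 :: u).
- by rewrite ltnW // (_ : i.+1 < (size u).+1) //; exact: chain.
Qed.

Lemma ocprefix_extend S x1 u : ocprefix S x1 u -> exists v, ocpath par S (x1 :: u ++ v).
Proof.
have [w last_u] : exists w, last x1 u = w by exists (last x1 u).
elim/parent_ind: w u last_u => w IH u last_u pre.
have S_w : S w by rewrite -last_u; apply: ocprefix_last pre.
have stop : siblingS par S w \/ rootS par S w -> exists v, ocpath par S (x1 :: u ++ v).
  by move=> h; exists [::]; rewrite cats0; apply/ocpathE; rewrite last_u.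
case hw: (par w) => [p|]; last by apply: stop; right; split=> // y; rewrite hw.
have [S_p|S_np] := classic (S p); last by apply: stop; right; split=> // y; rewrite hw => -[<-].
have [sib|nosib] := classic (siblingS par S w); first by apply: stop; left.
have pre' : ocprefix S x1 (rcons u p) by apply: ocprefix_rcons; rewrite ?last_u.
have [v path] := IH p hw (rcons u p) (last_rcons _ _ _) pre'.
by exists (p :: v); rewrite -cat_rcons.
Qed.

Lemma sibling_of_child c z : par c = Some z -> exists2 c', c != c' & par c' = Some z.
Proof.
move=> hc; have cz : c \in children par z by rewrite inE hc.
case/orP: (full z) => [/eqP/card0_eq/(_ c)|/cards2P[a [b [ab hab]]]]; first by rewrite cz inE.
have child y : y \in [set a; b] -> par y = Some z by rewrite -hab inE => /eqP.
move: cz; rewrite hab !inE => /orP[]/eqP->.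
- by exists b => //; apply: child; rewrite !inE eqxx orbT.
- by exists a; [rewrite eq_sym | apply: child; rewrite !inE eqxx].
Qed.

Lemma child_eq_pair c c' y z : par c = Some z -> par c' = Some z -> c != c' ->
  par y = Some z -> (y == c) || (y == c').
Proof.
move=> hc hc' neq hy.
have sub : [set c; c'] \subset children par z.
  by apply/subsetP=> w; rewrite !inE => /orP[]/eqP->; rewrite ?hc ?hc'.
have card2 : #|children par z| = 2.
  by case/orP: (full z) => /eqP // /card0_eq/(_ c); rewrite !inE hc eqxx.
have : y \in children par z by rewrite inE hy.
suff <- : [set c; c'] = children par z by rewrite !inE.
by apply/eqP; rewrite eqEcard sub card2 cards2 neq.
Qed.

Lemma rk_gt0 x a : rk par x a -> 0 < a.
Proof. by case=> // z y1 y2 a1 b1 *; case: eqP => ?; lia. Qed.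

Lemma rk_functional x a b : rk par x a -> rk par x b -> a = b.
Proof.
move=> ra; elim: ra b => [z leaf | z y1 y2 a1 b1 neq h1 h2 _ IH1 _ IH2] b rb.
- by inversion rb as [|? z1 ? ? ? _ h1]; [|case: (leaf z1)].
inversion rb as [? leaf|? z1 z2 a2 b2 neq' h1' h2' r1 r2]; subst; first by case: (leaf y1).
case/orP: (child_eq_pair h1 h2 neq h1') => /eqP e1;
  case/orP: (child_eq_pair h1 h2 neq h2') => /eqP e2; subst; rewrite ?eqxx // in neq'.
- by rewrite (IH1 _ r1) (IH2 _ r2).
- by rewrite (IH1 _ r2) (IH2 _ r1) -/(rjoin a2 b2) -/(rjoin b2 a2) rjoinC.
Qed.

Lemma rk_total x : exists k, rk par x k.
Proof.
elim/children_ind: x => x IH.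
case: (pickP (fun y => par y == Some x)) => [y /eqP hy | leaf].
- have [y' neq hy'] := sibling_of_child hy.
  have [[a ha] [b hb]] := (IH y hy, IH y' hy').
  by exists (rjoin a b); apply: rk_node neq hy hy' ha hb.
- by exists 1; apply: rk_leaf => y hy; have := leaf y; rewrite hy eqxx.
Qed.

Definition rank x := proj1_sig (constructive_indefinite_description _ (rk_total x)).

Lemma rankP x : rk par x (rank x).
Proof. by rewrite /rank; case: constructive_indefinite_description. Qed.

Lemma rk_rank x k : rk par x k -> rank x = k.
Proof. exact: rk_functional (rankP x). Qed.

Lemma rank_gt0 x : 0 < rank x.
Proof. exact: rk_gt0 (rankP x). Qed.

Lemma rank_node c c' z : par c = Some z -> par c' = Some z -> c != c' ->
  rank z = rjoin (rank c) (rank c').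
Proof. by move=> hc hc' neq; apply: rk_rank; apply: rk_node neq hc hc' (rankP c) (rankP c'). Qed.

Lemma rank_leaf z : (forall y, par y <> Some z) -> rank z = 1.
Proof. by move=> leaf; apply: rk_rank; apply: rk_leaf. Qed.

Lemma rank_child_le c z : par c = Some z -> rank c <= rank z.
Proof.
move=> hc; have [c' neq hc'] := sibling_of_child hc.
by rewrite (rank_node hc hc') // leq_rjoinl.
Qed.

Local Notation rank_ge j := (fun z : T => j <= rank z).

Lemma leaf_rank_le j x : 0 < j -> leafS par (rank_ge j) x -> rank x <= j.
Proof.
move=> j_gt0 [_ leaf].
case: (pickP (fun y => par y == Some x)) => [y /eqP hy | none].
- have [y' neq hy'] := sibling_of_child hy.
  rewrite (rank_node hy hy') // rjoin_leq // ltnNge; apply/negP => high_y.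
  + exact: leaf high_y hy.
  + exact: leaf high_y hy'.
- by rewrite rank_leaf // => y hy; have := none y; rewrite hy eqxx.
Qed.

Lemma ocpath_rank j s z : 0 < j -> ocpath par (rank_ge j) s -> z \in s -> rank z = j.
Proof.
case: s => [|x1 u] // j_gt0 /ocpathE[[leaf chain] _].
suff rank_nth i : i <= size u -> rank (nth x1 (x1 :: u) i) = j.
  by move=> zs; rewrite -(nth_index x1 zs) rank_nth // -ltnS index_mem.
elim: i => [_|i IH lt_iu].
- by have := leaf_rank_le j_gt0 leaf; case: leaf => /= ? _; lia.
have [[_ [high_Si hpar]] nosib] := chain i lt_iu.
have [c' neq hc'] := sibling_of_child hpar.
have low_c' : rank c' < j.
  rewrite ltnNge; apply/negP => high_c'; apply: nosib.
  by exists c'; split; [apply/eqP; rewrite eq_sym | split=> //; exists (nth x1 (x1 :: u) i.+1)].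
by apply/eqP; rewrite (rank_node hpar hc') // IH 1?ltnW // rjoin_idl.
Qed.

Lemma ocprefix_to_rank j z :
  rank z = j -> exists x1 u, ocprefix (rank_ge j) x1 u /\ last x1 u = z.
Proof.
elim/children_ind: z => z IH rank_z.
case: (pickP (fun c => (j <= rank c) && (par c == Some z))) => [c /andP[high_c /eqP hc]|none].
- have [c' neq hc'] := sibling_of_child hc.
  have rank_c : rank c = j by apply/eqP; rewrite eqn_leq high_c -rank_z rank_child_le.
  have low_c' : rank c' < j.
    by rewrite -rank_c -rjoin_idl -(rank_node hc hc') // rank_z rank_c.
  have [x1 [u [pre last_u]]] := IH c hc rank_c.
  exists x1, (rcons u z); split; last by rewrite last_rcons.
  apply: ocprefix_rcons pre _ _; rewrite last_u; first by rewrite /parS rank_z.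
  move=> [y [yc [high_y [p [_ [hcp hyp]]]]]]; move: hcp; rewrite hc => -[pz].
  rewrite -pz in hyp; case/orP: (child_eq_pair hc hc' neq hyp) => /eqP y_eq.
  + exact: yc.
  + by rewrite y_eq in high_y; lia.
- exists z, [::]; split=> //; split=> [|i //]; split; first by rewrite rank_z.
  by move=> y high_y hy; have := none y; rewrite high_y hy eqxx.
Qed.

Lemma prunedE i : pruned par i = rank_ge i.+1.
Proof.
elim: i => [|i IH] /=; apply: functional_extensionality => z;
  apply: propositional_extensionality.
- by split=> // _; apply: rank_gt0.
rewrite IH; split=> [[high_z not_deleted]|high_z].
- rewrite ltn_neqAle high_z andbT; apply/eqP => rank_z; apply: not_deleted.
  have [x1 [u [pre last_u]]] := ocprefix_to_rank (esym rank_z).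
  have [v path] := ocprefix_extend pre.
  by exists (x1 :: u ++ v); rewrite -cat_cons mem_cat -last_u mem_last.
- split; first exact: ltnW.
  by move=> [s [path zs]]; have := ocpath_rank (ltn0Sn i) path zs; lia.
Qed.

End Forest.

Theorem lemma10 (T : finType) (par : T -> option T) :
  is_forest par -> full_binary par ->
  forall x : T,
    (exists k, rk par x k) /\ (forall k, rk par x k -> deleted_at par x k).
Proof.
move=> forest full x; split; first exact: rk_total.
move=> k /(rk_rank forest full) <-.
by rewrite /deleted_at !(prunedE forest full) ltnn prednK ?rank_gt0.
Qed.
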